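(* Let $a<b$ be real numbers, $\mathbb{I}=[a,b]$, and let $M\ge 1$ and $N\ge 1$ be integers. Let $f:(\mathbb{I}^M)^N\to\mathbb{R}$ be a continuous set function with respect to the Hausdorff distance $d_H$. Then for every $\epsilon>0$ there exist a positive integer $K$, Gaussian kernels $\phi_1,\dots,\phi_K$ (i.e. vectors $\boldsymbol{\mu}_1,\dots,\boldsymbol{\mu}_K\in\mathbb{R}^M$ and positive semi-definite matrices $\boldsymbol{\Sigma}_1,\dots,\boldsymbol{\Sigma}_K\in\mathbb{R}^{M\times M}$), and a function $\gamma:\mathbb{R}^K\to\mathbb{R}$ such that for every $\mathcal{X}=(\boldsymbol{x}_1,\dots,\boldsymbol{x}_N)\in(\mathbb{I}^M)^N$, $$\Bigl|f(\mathcal{X})-\gamma\Bigl(\mathrm{MAX}\bigl(\{\phi_k(\boldsymbol{x}_i)\}_{k=1}^K\bigr)\Bigr)\Bigr|<\epsilon .$$ In particular, $g=\gamma\circ\mathrm{MAX}$ is a symmetric function of $(\boldsymbol{x}_1,\dots,\boldsymbol{x}_N)$, i.e. invariant under permutations of the points.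
   Context: A Gaussian kernel with mean $\boldsymbol{\mu}_k\in\mathbb{R}^M$ and positive semi-definite ''inverse covariance'' matrix $\boldsymbol{\Sigma}_k\in\mathbb{R}^{M\times M}$ is the function $\phi_k:\mathbb{R}^M\to(0,1]$, $\phi_k(\boldsymbol{x})=\exp\!\bigl(-(\boldsymbol{x}-\boldsymbol{\mu}_k)^\top\boldsymbol{\Sigma}_k(\boldsymbol{x}-\boldsymbol{\mu}_k)\bigr)$. For points $\boldsymbol{x}_1,\dots,\boldsymbol{x}_N$, $\mathrm{MAX}(\{\phi_k(\boldsymbol{x}_i)\}_{k=1}^K)\in\mathbb{R}^K$ denotes the vector whose $k$-th coordinate is $\max_{1\le i\le N}\phi_k(\boldsymbol{x}_i)$. An $N$-tuple $\mathcal{X}=(\boldsymbol{x}_1,\dots,\boldsymbol{x}_N)$ is identified with the finite set $\{\boldsymbol{x}_1,\dots,\boldsymbol{x}_N\}\subset\mathbb{R}^M$, and $d_H(\mathcal{X},\mathcal{X}')=\max\bigl(\sup_{x\in\mathcal{X}}\inf_{x'\in\mathcal{X}'}\|x-x'\|,\ \sup_{x'\in\mathcal{X}'}\inf_{x\in\mathcal{X}}\|x-x'\|\bigr)$ is the Hausdorff distance between these sets (Euclidean norm). A function $f$ on tuples of points is a continuous set function w.r.t. $d_H$ if for every $\mathcal{X}$ and every $\epsilon>0$ there is $\delta>0$ such that $d_H(\mathcal{X},\mathcal{X}')<\delta$ implies $|f(\mathcal{X})-f(\mathcal{X}')|<\epsilon$. *)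

From HB Require Import structures.
From mathcomp Require Import all_boot all_order all_algebra all_fingroup.
From mathcomp Require Import all_classical all_reals all_analysis.
Set Implicit Arguments. Unset Strict Implicit. Unset Printing Implicit Defensive.
Import Order.TTheory GRing.Theory Num.Theory.
Local Open Scope ring_scope.
Local Open Scope classical_set_scope.

Section Defs.
Variable R : realType.

Definition eucl_norm (M : nat) (v : 'rV[R]_M) : R :=
  Num.sqrt (\sum_(i < M) (v ord0 i) ^+ 2).

Definition psd (M : nat) (S : 'M[R]_M) : Prop :=
  S^T = S /\ forall v : 'rV[R]_M, 0 <= (v *m S *m v^T) ord0 ord0.

Definition gauss (M : nat) (mu : 'rV[R]_M) (S : 'M[R]_M) (x : 'rV[R]_M) : R :=
  expR (- ((x - mu) *m S *m (x - mu)^T) ord0 ord0).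

Definition in_cube (a b : R) (M N : nat) (X : 'I_N -> 'rV[R]_M) : Prop :=
  forall i j, a <= X i ord0 j <= b.

Definition dist_pt_set (M N : nat) (x : 'rV[R]_M) (X' : 'I_N -> 'rV[R]_M) : R :=
  inf [set eucl_norm (x - X' j) | j in [set: 'I_N]].

Definition hausdorff (M N : nat) (X X' : 'I_N -> 'rV[R]_M) : R :=
  Num.max (\big[Num.max/0]_(i < N) dist_pt_set (X i) X')
          (\big[Num.max/0]_(j < N) dist_pt_set (X' j) X).

Definition hausdorff_continuous (a b : R) (M N : nat)
  (f : ('I_N -> 'rV[R]_M) -> R) : Prop :=
  forall X, in_cube a b X -> forall eps : R, 0 < eps ->
    exists2 delta : R, 0 < delta &
      forall X', in_cube a b X' -> hausdorff X X' < delta -> `|f X - f X'| < eps.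

Definition max_feat (M N K : nat) (mu : 'I_K -> 'rV[R]_M) (S : 'I_K -> 'M[R]_M)
  (X : 'I_N -> 'rV[R]_M) : 'rV[R]_K :=
  \row_(k < K) \big[Num.max/0]_(i < N) gauss (mu k) (S k) (X i).

End Defs.

From HB Require Import structures.
From mathcomp Require Import all_boot all_order all_algebra all_fingroup.
From mathcomp Require Import all_classical all_reals all_analysis.
From mathcomp Require Import ring lra.
Import numFieldNormedType.Exports.
Import Order.TTheory GRing.Theory Num.Theory.
Local Open Scope ring_scope.

(* Call two N-tuples d-close when every point of each tuple lies
   within d, coordinatewise, of some point of the other; d-closeness bounds
   their Hausdorff distance by M*d.  Since the cube [a,b]^M is compact, a
   Hausdorff-continuous f is uniformly continuous for this notion: there is
   d > 0 such that f varies by less than eps between d-close tuples of the cube.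
     The Gaussian kernels all have identity covariance and are centred on a
   grid of mesh h = d/(M+1) covering [a,b]^M.  If X and Y in the cube have the
   same MAX-feature vector, each point x_i has a grid centre c within h of it;
   the kernel at c is matched by some point y_j, so |y_j - c|^2 <= |x_i - c|^2
   <= M h^2 and x_i, y_j are (M+1)h-close.  Hence equal features force
   |f X - f Y| < eps, and f factors up to eps through the features: gamma
   picks by choice any tuple with the given features.  Symmetry holds because
   a maximum over the points ignores their order. *)

Section Closeness.
Set Implicit Arguments. Unset Strict Implicit.
Local Open Scope classical_set_scope.
Variables (R : realType) (M N : nat).
Implicit Types (x y z : 'rV[R]_M) (X Y Z : 'I_N -> 'rV[R]_M).

Definition near_pt (d : R) x y : Prop := forall l, `|x ord0 l - y ord0 l| <= d.

Lemma near_ptC d x y : near_pt d x y -> near_pt d y x.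
Proof. by move=> H l; rewrite distrC. Qed.

Lemma near_pt_trans d1 d2 d x y z :
  d1 + d2 <= d -> near_pt d1 x y -> near_pt d2 y z -> near_pt d x z.
Proof.
move=> le_d Hxy Hyz l; have := ler_distD (y ord0 l) (x ord0 l) (z ord0 l).
by have := Hxy l; have := Hyz l; lra.
Qed.

Definition close (d : R) X Y : Prop :=
  (forall i, exists j, near_pt d (X i) (Y j)) /\
  (forall j, exists i, near_pt d (Y j) (X i)).

Lemma close_trans d1 d2 d X Y Z :
  d1 + d2 <= d -> close d1 X Y -> close d2 Y Z -> close d X Z.
Proof.
move=> le_d [XY YX] [YZ ZY]; split=> [i | k].
- have [j Hj] := XY i; have [k Hk] := YZ j.
  by exists k; apply: near_pt_trans Hj Hk.
- have [j Hj] := ZY k; have [i Hi] := YX j.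
  by exists i; apply: near_pt_trans Hj Hi; rewrite addrC.
Qed.

Lemma natr_le_sqr (n : nat) : (n%:R : R) <= n%:R ^+ 2.
Proof. by rewrite -natrX ler_nat; case: n => // n; rewrite leq_pmulr. Qed.

Definition sqdist x y : R := \sum_l (x ord0 l - y ord0 l) ^+ 2.

Lemma sqdist_le_near (h : R) x y :
  0 <= h -> near_pt h x y -> sqdist x y <= M%:R * h ^+ 2.
Proof.
move=> h0 Hxy; apply: (@le_trans _ _ (\sum_(l < M) h ^+ 2)).
  apply: ler_sum => l _; rewrite -real_normK ?num_real //.
  by have := Hxy l; have := normr_ge0 (x ord0 l - y ord0 l); nra.
by rewrite sumr_const card_ord mulr_natl.
Qed.

Lemma eucl_dist_le_near (d : R) x y :
  0 <= d -> near_pt d x y -> eucl_norm (x - y) <= M%:R * d.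
Proof.
move=> d0 Hxy; have Md : 0 <= M%:R * d by rewrite mulr_ge0.
have -> : eucl_norm (x - y) = Num.sqrt (sqdist x y).
  by congr Num.sqrt; apply: eq_bigr => l _; rewrite !mxE.
rewrite -(ger0_norm Md) -sqrtr_sqr ler_wsqrtr //.
apply: le_trans (sqdist_le_near d0 Hxy) _.
by rewrite exprMn ler_wpM2r ?sqr_ge0 ?natr_le_sqr.
Qed.

Lemma dist_pt_set_le (d : R) x Z k :
  0 <= d -> near_pt d x (Z k) -> dist_pt_set x Z <= M%:R * d.
Proof.
move=> d0 Hk; rewrite /dist_pt_set.
have lb : has_lbound [set eucl_norm (x - Z j) | j in [set: 'I_N]].
  by exists 0 => _ [j _ <-]; apply: sqrtr_ge0.
apply: (@le_trans _ _ (eucl_norm (x - Z k))); first by apply: (ge_inf lb); exists k.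
exact: eucl_dist_le_near.
Qed.

Lemma hausdorff_le_close (d : R) X Y :
  0 <= d -> close d X Y -> hausdorff X Y <= M%:R * d.
Proof.
move=> d0 [XY YX]; have Md : 0 <= M%:R * d by rewrite mulr_ge0.
rewrite /hausdorff ge_max; apply/andP; split; apply: bigmax_le => // i _.
  by have [j Hj] := XY i; apply: dist_pt_set_le Hj.
by have [j Hj] := YX i; apply: dist_pt_set_le Hj.
Qed.

(* Tuples viewed as row vectors of points, whose product topology makes the
   cube compact. *)
Definition tup (v : 'rV['rV[R]_M]_N) : 'I_N -> 'rV[R]_M := fun i => v ord0 i.

Lemma tup_row X : tup (\row_i X i) = X.
Proof. by apply: funext => i; rewrite /tup mxE. Qed.

Definition seg_pt (a b : R) : set 'rV[R]_M :=
  [set w | forall l, `[a, b] (w ord0 l)].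
Definition cube (a b : R) : set 'rV['rV[R]_M]_N :=
  [set v | forall i, seg_pt a b (v ord0 i)].

Lemma cube_compact (a b : R) : compact (cube a b).
Proof.
apply: (@rV_compact _ _ (fun=> seg_pt a b)) => _.
by apply: (@rV_compact _ _ (fun=> `[a, b])) => _; exact: segment_compact.
Qed.

Lemma cube_in_cube (a b : R) v : cube a b v <-> in_cube a b (tup v).
Proof. by split=> H i j; [have := H i j | ]; rewrite /= in_itv //; apply: H. Qed.

Lemma ball_close (x y : 'rV['rV[R]_M]_N) (e : R) :
  ball x e y -> close e (tup x) (tup y).
Proof.
have entry : ball x e y -> forall i, near_pt e (tup x i) (tup y i).
  by case=> _ /(_ ord0) H i; case: (H i) => _ /(_ ord0) H' l; exact/ltW/(H' l).
move=> /entry Hxy; split=> i; exists i; first exact: Hxy.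
exact/near_ptC/Hxy.
Qed.

(* By compactness (near coverings) it suffices that each x of the cube has a
   neighbourhood of points y and a threshold on d such that d-close pairs
   (y, w) satisfy the bound; take both y and w within Hausdorff distance
   delta of x, where delta is given by continuity at x for eps/2. *)
Lemma close_uniform_continuity (a b : R) (f : ('I_N -> 'rV[R]_M) -> R) :
  hausdorff_continuous a b f -> forall eps : R, 0 < eps ->
  exists2 d : R, 0 < d & forall X Y, in_cube a b X -> in_cube a b Y ->
    close d X Y -> `|f X - f Y| < eps.
Proof.
move=> hc eps eps0.
pose P (d : R) (v : 'rV['rV[R]_M]_N) := forall w, cube a b w ->
  close d (tup v) (tup w) -> `|f (tup v) - f (tup w)| < eps.
have cover := proj2 (near_covering_withinP (cube a b))
  (proj1 (compact_near_coveringP (cube a b)) (cube_compact (a:=a) (b:=b))).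
have Pnear : \forall d \near (0:R)^'+, cube a b `<=` P d.
  apply: cover => x /cube_in_cube Kx.
  have [delta delta0 Hd] := hc _ Kx (eps / 2) ltac:(by rewrite divr_gt0).
  pose e := delta / (4 * (M%:R + 1)).
  have M1 : 0 < (M%:R : R) + 1 by rewrite ltr_wpDl.
  have e0 : 0 < e by rewrite divr_gt0 // mulr_gt0.
  have Me : M%:R * e <= delta / 4.
    have -> : delta / 4 = (M%:R + 1) * e by rewrite /e; field; rewrite gt_eqF.
    by apply: ler_wpM2r; [exact: ltW | lra].
  have fx_near Y d' : in_cube a b Y -> 0 <= d' <= e + e ->
      close d' (tup x) Y -> `|f (tup x) - f Y| < eps / 2.
    move=> HY /andP[d'0 d'e] C; apply: Hd => //.
    have := hausdorff_le_close d'0 C.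
    have := ler_wpM2l (ler0n R M) d'e; rewrite mulrDr; lra.
  near=> y d => /= Ky w /cube_in_cube Kw Cyw.
  have Cxy : close e (tup x) (tup y).
    by apply: ball_close; near: y; exact: nbhsx_ballx.
  have d0 : 0 < d by near: d; exact: nbhs_right_gt.
  have de : d < e by near: d; exact: nbhs_right_lt.
  have fxy := fx_near _ e (proj1 (cube_in_cube _ _ _) Ky) ltac:(apply/andP; lra) Cxy.
  have fxw := fx_near _ (e + d) Kw ltac:(apply/andP; lra) (close_trans (lexx _) Cxy Cyw).
  have := ler_distD (f (tup x)) (f (tup y)) (f (tup w)).
  by rewrite distrC in fxy; lra.
have [d [d0 Hd]] := filter_ex (filterI (nbhs_right_gt 0) Pnear).
exists d => // X Y HX HY; rewrite -[X]tup_row -[Y]tup_row.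
by apply: Hd; apply/cube_in_cube; rewrite tup_row.
Unshelve. all: end_near.
Qed.
End Closeness.

Section GaussianGrid.
Set Implicit Arguments. Unset Strict Implicit.
Variables (R : realType) (M N : nat).
Implicit Types (x y : 'rV[R]_M) (X Y : 'I_N -> 'rV[R]_M).

Lemma psd_id : psd (1%:M : 'M[R]_M).
Proof.
split=> [|v]; first exact: trmx1.
by rewrite mulmx1 !mxE; apply: sumr_ge0 => l _; rewrite !mxE -expr2 sqr_ge0.
Qed.

Lemma gauss_id mu x : gauss mu 1%:M x = expR (- sqdist x mu).
Proof.
rewrite /gauss mulmx1 !mxE; congr (expR (- _)).
by apply: eq_bigr => l _; rewrite !mxE expr2.
Qed.

Lemma near_of_sqdist (h : R) x y : 0 <= h -> sqdist x y <= M%:R * h ^+ 2 ->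
  near_pt (M%:R * h) x y.
Proof.
move=> h0 Hxy l.
have coord : (x ord0 l - y ord0 l) ^+ 2 <= sqdist x y.
  by rewrite /sqdist (bigD1 l) //= lerDl; apply: sumr_ge0 => k _; exact: sqr_ge0.
have Mh : M%:R * h ^+ 2 <= (M%:R * h) ^+ 2.
  by rewrite exprMn ler_wpM2r ?sqr_ge0 ?natr_le_sqr.
have Mh0 : 0 <= M%:R * h by rewrite mulr_ge0.
rewrite -ler_sqr ?nnegrE // real_normK ?num_real //.
exact: le_trans coord (le_trans Hxy Mh).
Qed.

(* The grid of centres a + n h (0 <= n <= (b-a)/h) in each coordinate, indexed
   by the finite type of coordinate choices. *)
Definition grid_size (a b h : R) : nat := Num.truncn ((b - a) / h).

Definition grid_center (a b h : R)
    (k : 'I_#|{ffun 'I_M -> 'I_(grid_size a b h).+1}|) : 'rV[R]_M :=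
  \row_l (a + (enum_val k l : nat)%:R * h).
Arguments grid_center : clear implicits.

Lemma grid_covers (a b h : R) x : 0 < h -> (forall l, a <= x ord0 l <= b) ->
  exists k, near_pt h x (grid_center a b h k).
Proof.
move=> h0 Hx; pose t l := (x ord0 l - a) / h.
have t_lt l : (Num.truncn (t l) < (grid_size a b h).+1)%N.
  rewrite ltnS; apply: le_truncn; rewrite ler_pM2r ?invr_gt0 //.
  by case/andP: (Hx l); lra.
pose g : {ffun 'I_M -> 'I_(grid_size a b h).+1} := [ffun l => Ordinal (t_lt l)].
exists (enum_rank g) => l; rewrite mxE enum_rankK ffunE /=.
have th : t l * h = x ord0 l - a by rewrite /t mulrAC -mulrA mulfV ?gt_eqF ?mulr1.
have t_ge0 : 0 <= t l by rewrite divr_ge0 ?subr_ge0 ?(ltW h0) //; case/andP: (Hx l).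
have lo : (Num.truncn (t l))%:R <= t l by rewrite truncn_le t_ge0.
have hi : t l < (Num.truncn (t l))%:R + 1 by rewrite natr1 truncnS_gt.
move: lo hi; set n := (Num.truncn (t l))%:R => lo hi.
by rewrite ler_norml; apply/andP; split; nra.
Qed.

Lemma bigmax_pos_attained (F : 'I_N -> R) (c : R) :
  0 < c -> c <= \big[Num.max/0]_(i < N) F i -> exists i, c <= F i.
Proof.
move=> c0 /bigmax_geP[c_le0 | [i _ Hi]]; last by exists i.
by move: c_le0; rewrite leNgt c0.
Qed.

(* Equal grid features force the point sets to be ((M+1)h)-close: each point
   x_i of X is near a centre, whose kernel value is matched by some y_j. *)
Lemma same_features_near (a b h : R) X Y : 0 < h -> in_cube a b X ->
  max_feat (grid_center a b h) (fun=> 1%:M) X =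
  max_feat (grid_center a b h) (fun=> 1%:M) Y ->
  forall i, exists j, near_pt ((M%:R + 1) * h) (X i) (Y j).
Proof.
move=> h0 HX feat_eq i; have [k Hk] := grid_covers h0 (HX i).
set c := grid_center a b h k in Hk.
have matched : gauss c 1%:M (X i) <= \big[Num.max/0]_(j < N) gauss c 1%:M (Y j).
  move: feat_eq => /rowP/(_ k); rewrite !mxE => <-.
  exact: (le_bigmax _ (fun j => gauss c 1%:M (X j)) i).
have [j Hj] : exists j, gauss c 1%:M (X i) <= gauss c 1%:M (Y j).
  by apply: bigmax_pos_attained matched; exact: expR_gt0.
exists j; move: Hj; rewrite !gauss_id ler_expR lerN2 => Yj_le.
have Yj_near := near_of_sqdist (ltW h0) (le_trans Yj_le (sqdist_le_near (ltW h0) Hk)).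
by apply: near_pt_trans Hk (near_ptC Yj_near); rewrite mulrDl mul1r addrC.
Qed.

Lemma max_feat_perm (K : nat) (mu : 'I_K -> 'rV[R]_M) (S : 'I_K -> 'M[R]_M)
    (s : 'S_N) X :
  max_feat mu S (fun i => X (s i)) = max_feat mu S X.
Proof. by apply/rowP => k; rewrite !mxE [RHS](reindex_inj (@perm_inj _ s)). Qed.
End GaussianGrid.
Arguments grid_center {R M} a b h k.

Lemma factor_through_features (R : realType) (T V : Type) (A : T -> Prop)
    (feat : T -> V) (f : T -> R) (eps : R) :
  (forall X Y, A X -> A Y -> feat X = feat Y -> `|f X - f Y| < eps) ->
  exists gamma : V -> R, forall X, A X -> `|f X - gamma (feat X)| < eps.
Proof.
move=> f_feat.
exists (fun v => if pselect (exists Y, A Y /\ feat Y = v) is left e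
                 then f (proj1_sig (cid e)) else 0).
move=> X AX; case: pselect => [e | []]; last by exists X.
by case: (cid e) => Y [AY eq_feat] /=; apply: f_feat.
Qed.

Theorem lemma1 (R : realType) (a b : R) (M N : nat)
  (f : ('I_N -> 'rV[R]_M) -> R) :
  a < b -> (0 < M)%N -> (0 < N)%N ->
  hausdorff_continuous a b f ->
  forall eps : R, 0 < eps ->
  exists (K : nat) (mu : 'I_K -> 'rV[R]_M) (Sigma : 'I_K -> 'M[R]_M)
         (gamma : 'rV[R]_K -> R),
    [/\ (0 < K)%N,
        (forall k, psd (Sigma k)),
        (forall X, in_cube a b X ->
           `|f X - gamma (max_feat mu Sigma X)| < eps) &
        (forall (s : 'S_N) (X : 'I_N -> 'rV[R]_M),
           gamma (max_feat mu Sigma (fun i => X (s i))) =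
           gamma (max_feat mu Sigma X))].
Proof.
move=> _ _ _ f_cont eps eps0.
have [d d0 f_unif] := close_uniform_continuity f_cont eps0.
have M1 : 0 < (M%:R : R) + 1 by rewrite ltr_wpDl.
pose h := d / (M%:R + 1).
have h0 : 0 < h by rewrite divr_gt0.
have dh : (M%:R + 1) * h = d by rewrite /h mulrC -mulrA mulVf ?mulr1 ?gt_eqF.
pose feat := @max_feat R M N _ (grid_center a b h) (fun=> 1%:M).
have feat_close (X Y : 'I_N -> 'rV[R]_M) :
    in_cube a b X -> in_cube a b Y -> feat X = feat Y -> `|f X - f Y| < eps.
  move=> HX HY eq_feat; apply: f_unif => //; rewrite -dh.
  by split; [exact: same_features_near | exact: same_features_near (esym eq_feat)].
have [gamma Hgamma] := factor_through_features feat_close.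
exists _, (grid_center a b h), (fun=> 1%:M), gamma; split.
- by apply/card_gt0P; exists [ffun=> ord0].
- by move=> _; exact: psd_id.
- exact: Hgamma.
- by move=> s X; rewrite max_feat_perm.
Qed.
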